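(* For any fixed $s\in[0,1)$, as $n\to\infty$, $$\theta^*_n(s)=\frac{1}{1+\frac{\kappa}{(n-1)(1-s)}}+o\Big(\frac1n\Big),$$ where $\kappa\approx0.80435$ is the positive solution of $\sum_{k\ge1}\frac{\kappa^k}{k!\,k}=1$.
   Context: For $n\ge2$ and $s\in[0,1)$, $\theta^*_n(s)$ is the unique solution in $(0,1)$ of $\int_s^1\frac{(1-t+t\theta^*_n(s))^{n-1}-\theta^*_n(s)^{n-1}}{1-t}\,\mathrm dt=\theta^*_n(s)^{n-1}$. *)

From Stdlib Require Import Reals Factorial.
From Coquelicot Require Import Coquelicot.
Open Scope R_scope.

(* Integrand of the defining equation of theta*_n(s):
   ((1 - t + t*th)^(n-1) - th^(n-1)) / (1 - t).
   (At t = 1 this has a removable singularity; a single point does not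
   affect the Riemann integral.) *)
Definition theta_integrand (n : nat) (th t : R) : R :=
  ((1 - t + t * th) ^ (n - 1) - th ^ (n - 1)) / (1 - t).

Definition is_theta_star (n : nat) (s th : R) : Prop :=
  0 < th < 1 /\ is_RInt (theta_integrand n th) s 1 (th ^ (n - 1)).

Definition is_kappa (kappa : R) : Prop :=
  0 < kappa /\
  is_series (fun k : nat => kappa ^ (S k) / (INR (Factorial.fact (S k)) * INR (S k))) 1.

From Stdlib Require Import Reals Lra Lia Factorial.
From Coquelicot Require Import Coquelicot.
Open Scope R_scope.

(* With m = n - 1, the substitution y = (1-th)(1-t)/th turns the defining equation of
   th = theta*_n(s) into G m (z/m) = 1, where z = m (1-th)(1-s)/th and
   G m y = sum_{k=1}^m C(m,k) y^k / k.  Termwise, G m (kappa/m) differs from the partial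
   sums of sum_k kappa^k/(k! k) only by the factors m(m-1)...(m-k+1)/m^k in [1 - k^2/m, 1],
   so 1 - O(1/m) <= G m (kappa/m) <= 1.  Since G m (c y) >= c G m y for c >= 1 and
   <= c G m y for c <= 1, this pins z between kappa and kappa / G m (kappa/m) = kappa + O(1/m),
   and th = m(1-s)/(m(1-s) + z) then gives the expansion. *)

Definition G (m : nat) (y : R) : R :=
  sum_f_R0 (fun i => Binomial.C m (S i) * y ^ S i / INR (S i)) (pred m).

Definition G' (m : nat) (y : R) : R :=
  sum_f_R0 (fun i => Binomial.C m (S i) * y ^ i) (pred m).

Lemma is_derive_G m y : is_derive (G m) y (G' m y).
Proof.
  unfold G, G'; rewrite <- sum_n_Reals.
  apply is_derive_ext with
    (fun x => sum_n (fun i => Binomial.C m (S i) * x ^ S i / INR (S i)) (pred m)).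
  { intros x; now rewrite sum_n_Reals. }
  apply (is_derive_sum_n (fun i x => Binomial.C m (S i) * x ^ S i / INR (S i)));
    intros i _; auto_derive; [auto|].
  change (match i with 0%nat => 1 | S _ => INR i + 1 end) with (INR (S i)).
  field; apply not_0_INR; lia.
Qed.

Lemma continuous_G' m y : continuous (G' m) y.
Proof.
  apply (ex_derive_continuous (K := R_AbsRing) (V := R_NormedModule) (G' m)).
  apply ex_derive_ext with
    (fun x => sum_n (fun i => Binomial.C m (S i) * x ^ i) (pred m)).
  { intros x; now rewrite sum_n_Reals. }
  apply (ex_derive_sum_n (fun i x => Binomial.C m (S i) * x ^ i));
    intros i _; auto_derive; auto.
Qed.

Lemma G_0 m : G m 0 = 0.
Proof.
  unfold G; rewrite sum_eq_R0; [reflexivity|].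
  intros i _; rewrite pow_i by lia; unfold Rdiv; ring.
Qed.

Lemma G'_closed_form m y : (1 <= m)%nat -> y * G' m y = (1 + y) ^ m - 1.
Proof.
  intros Hm; rewrite Rplus_comm, binomial, decomp_sum by lia.
  rewrite C_n_0, Nat.sub_0_r, pow1; unfold G'; rewrite scal_sum.
  replace (1 * y ^ 0 * 1 + _ - 1) with
    (sum_f_R0 (fun i => Binomial.C m (S i) * y ^ S i * 1 ^ (m - S i)) (pred m))
    by (simpl; ring).
  apply sum_eq; intros i _; rewrite pow1; simpl; ring.
Qed.

Lemma theta_integrand_G' m th t : (1 <= m)%nat -> th <> 0 -> t <> 1 ->
  ((1 - t + t * th) ^ m - th ^ m) / (1 - t)
  = th ^ m * ((1 - th) / th) * G' m ((1 - th) / th * (1 - t)).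
Proof.
  intros Hm Hth Ht.
  set (y := (1 - th) / th * (1 - t)).
  replace (1 - t + t * th) with (th * (1 + y)) by (unfold y; field; exact Hth).
  rewrite Rpow_mult_distr.
  replace ((1 + y) ^ m) with (y * G' m y + 1) by (rewrite G'_closed_form by exact Hm; ring).
  unfold y; field; split; [exact Hth | lra].
Qed.

Lemma is_RInt_theta_integrand m th s : (1 <= m)%nat -> 0 < th -> s < 1 ->
  is_RInt (fun t => ((1 - t + t * th) ^ m - th ^ m) / (1 - t)) s 1
    (th ^ m * G m ((1 - th) * (1 - s) / th)).
Proof.
  intros Hm Hth Hs.
  set (a := (1 - th) / th).
  set (F := fun t => - th ^ m * G m (a * (1 - t))).
  set (f := fun t => th ^ m * a * G' m (a * (1 - t))).
  apply is_RInt_ext with f.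
  { intros t Ht; rewrite Rmin_left, Rmax_right in Ht by lra.
    symmetry; apply theta_integrand_G'; [exact Hm | lra | lra]. }
  replace (th ^ m * G m ((1 - th) * (1 - s) / th)) with (F 1 - F s)
    by (unfold F, a; rewrite Rminus_diag, Rmult_0_r, G_0;
        replace ((1 - th) / th * (1 - s)) with ((1 - th) * (1 - s) / th) by (field; lra);
        ring).
  apply (is_RInt_derive F f).
  - intros x _; unfold F, f.
    auto_derive.
    + exists (G' m (a * (1 + - x))); apply is_derive_G.
    + rewrite (is_derive_unique (G m) _ _ (is_derive_G m _)).
      replace (1 + - x) with (1 - x) by ring; ring.
  - intros x _; unfold f.
    apply (continuous_comp (fun t => a * (1 - t)) (fun y => th ^ m * a * G' m y)).
    + apply (ex_derive_continuous (K := R_AbsRing) (V := R_NormedModule)); auto_derive; exact I.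
    + apply (continuous_mult (fun _ => th ^ m * a) (G' m)); [apply continuous_const | apply continuous_G'].
Qed.

Lemma theta_star_G n s th : (2 <= n)%nat -> s < 1 -> is_theta_star n s th ->
  G (n - 1) ((1 - th) * (1 - s) / th) = 1.
Proof.
  intros Hn Hs [[Hth _] Hint].
  pose proof (is_RInt_theta_integrand (n - 1) th s ltac:(lia) Hth Hs) as HG.
  apply (Rmult_eq_reg_l (th ^ (n - 1))); [| apply pow_nonzero; lra].
  rewrite Rmult_1_r, <- (is_RInt_unique _ _ _ _ HG).
  exact (is_RInt_unique (V := R_CompleteNormedModule) _ _ _ _ Hint).
Qed.

Lemma C_pos n k : 0 < Binomial.C n k.
Proof.
  unfold Binomial.C; apply Rdiv_lt_0_compat.
  - apply lt_0_INR, lt_O_fact.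
  - apply Rmult_lt_0_compat; apply lt_0_INR, lt_O_fact.
Qed.

Lemma G_term_nonneg m y i : 0 <= y -> 0 <= Binomial.C m (S i) * y ^ S i / INR (S i).
Proof.
  intros Hy; apply Rdiv_le_0_compat; [| apply lt_0_INR; lia].
  apply Rmult_le_pos; [apply Rlt_le, C_pos | apply pow_le, Hy].
Qed.

Lemma G_pos m y : 0 < y -> 0 < G m y.
Proof.
  intros Hy; apply tech1; intros i _.
  apply Rdiv_lt_0_compat; [| apply lt_0_INR; lia].
  apply Rmult_lt_0_compat; [apply C_pos | apply pow_lt, Hy].
Qed.

Lemma G_scale m c y :
  G m (c * y) = sum_f_R0 (fun i => c ^ S i * (Binomial.C m (S i) * y ^ S i / INR (S i))) (pred m).
Proof.
  unfold G; apply sum_eq; intros i _.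
  rewrite Rpow_mult_distr; unfold Rdiv; ring.
Qed.

Lemma G_scale_ge m c y : 1 <= c -> 0 <= y -> c * G m y <= G m (c * y).
Proof.
  intros Hc Hy; rewrite G_scale; unfold G; rewrite scal_sum.
  apply sum_Rle; intros i _.
  pose proof (G_term_nonneg m y i Hy).
  assert (c <= c ^ S i) by (simpl; pose proof (pow_R1_Rle c i Hc); nra).
  nra.
Qed.

Lemma G_scale_le m c y : 0 <= c <= 1 -> 0 <= y -> G m (c * y) <= c * G m y.
Proof.
  intros Hc Hy; rewrite G_scale; unfold G; rewrite scal_sum.
  apply sum_Rle; intros i _.
  pose proof (G_term_nonneg m y i Hy).
  assert (c ^ S i <= c).
  { simpl; assert (c ^ i <= 1) by (rewrite <- (pow1 i); apply pow_incr; lra); nra. }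
  nra.
Qed.

Lemma G_level_bracket m x y : 0 < x -> G m x <= 1 -> 0 <= y -> G m y = 1 ->
  x <= y /\ y * G m x <= x.
Proof.
  intros Hx Hx1 Hy Hy1.
  pose proof (G_pos m x Hx) as Hgx.
  set (c := y / x).
  assert (Hyc : y = c * x) by (unfold c; field; lra).
  assert (Hc : 0 <= c) by (unfold c; apply Rdiv_le_0_compat; lra).
  destruct (Rle_dec 1 c) as [Hc1 | Hc1].
  - pose proof (G_scale_ge m c x Hc1 (Rlt_le _ _ Hx)) as H.
    rewrite <- Hyc, Hy1 in H; split; nra.
  - pose proof (G_scale_le m c x ltac:(lra) (Rlt_le _ _ Hx)) as H.
    rewrite <- Hyc, Hy1 in H; nra.
Qed.

Definition falling_ratio (m k : nat) : R := INR (fact m) / (INR (fact (m - k)) * INR m ^ k).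

Lemma falling_ratio_0 m : falling_ratio m 0 = 1.
Proof.
  unfold falling_ratio; rewrite Nat.sub_0_r; simpl pow.
  field; apply INR_fact_neq_0.
Qed.

Lemma falling_ratio_S m k : (k < m)%nat ->
  falling_ratio m (S k) = falling_ratio m k * (1 - INR k / INR m).
Proof.
  intros Hk; unfold falling_ratio.
  replace (m - k)%nat with (S (m - S k)) by lia.
  rewrite fact_simpl, mult_INR.
  assert (HS : INR (S (m - S k)) = INR m - INR k)
    by (rewrite <- minus_INR by lia; f_equal; lia).
  assert (INR k < INR m) by (apply lt_INR; lia).
  assert (0 <= INR k) by apply pos_INR.
  assert (INR (fact (m - S k)) <> 0) by apply INR_fact_neq_0.
  assert (INR m ^ k <> 0) by (apply pow_nonzero; lra).
  rewrite HS; simpl pow; field; repeat split; auto; lra.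
Qed.

Lemma falling_ratio_bounds m k : (1 <= m)%nat -> (k <= m)%nat ->
  0 <= falling_ratio m k <= 1 /\ 1 - INR k ^ 2 / INR m <= falling_ratio m k.
Proof.
  intros Hm; induction k as [| k IH]; intros Hk.
  - rewrite falling_ratio_0; simpl; assert (0 < INR m) by (apply lt_0_INR; lia).
    split; [lra |]; unfold Rdiv; nra.
  - destruct IH as [[H0 H1] H2]; [lia |].
    rewrite falling_ratio_S by lia; rewrite S_INR.
    assert (INR k < INR m) by (apply lt_INR; lia).
    assert (0 <= INR k) by apply pos_INR.
    assert (0 < INR m) by (apply lt_0_INR; lia).
    assert (Hq : INR k / INR m * INR m = INR k) by (field; lra).
    assert (0 <= INR k / INR m) by (apply Rdiv_le_0_compat; lra).
    assert (INR k / INR m <= 1) by nra.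
    assert (0 < / INR m) by (apply Rinv_0_lt_compat; lra).
    replace ((INR k + 1) ^ 2 / INR m) with (INR k ^ 2 / INR m + 2 * (INR k / INR m) + / INR m)
      by (field; lra).
    split; [split |]; nra.
Qed.

(* Ein x = int_0^x (e^u - 1)/u du = sum_i Ein_term x i; is_kappa kappa says Ein kappa = 1. *)
Definition Ein_term (x : R) (i : nat) : R := x ^ S i / (INR (fact (S i)) * INR (S i)).

Lemma Ein_term_nonneg x i : 0 <= x -> 0 <= Ein_term x i.
Proof.
  intros Hx; apply Rdiv_le_0_compat; [apply pow_le, Hx |].
  apply Rmult_lt_0_compat; [apply lt_0_INR, lt_O_fact | apply lt_0_INR; lia].
Qed.

Lemma G_falling_ratio m x : (1 <= m)%nat ->
  G m (x / INR m) = sum_f_R0 (fun i => falling_ratio m (S i) * Ein_term x i) (pred m).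
Proof.
  intros Hm; unfold G; apply sum_eq; intros i _.
  unfold falling_ratio, Ein_term, Binomial.C, Rdiv.
  assert (INR m <> 0) by (apply not_0_INR; lia).
  rewrite Rpow_mult_distr, pow_inv.
  field; repeat split; try apply INR_fact_neq_0; [apply not_0_INR; lia | apply pow_nonzero; auto].
Qed.

Lemma Ein_weighted_sum_le x N : 0 <= x < 1 ->
  sum_f_R0 (fun i => INR (S i) ^ 2 * Ein_term x i) N <= 1 / (1 - x).
Proof.
  intros Hx.
  apply Rle_trans with (sum_f_R0 (fun i => x ^ i) N).
  - apply sum_Rle; intros i _; unfold Ein_term.
    assert (1 <= INR (fact i)) by (apply (le_INR 1), lt_O_fact).
    assert (0 < INR (S i)) by (apply lt_0_INR; lia).
    assert (0 <= x ^ i) by (apply pow_le; lra).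
    rewrite fact_simpl, mult_INR.
    replace (INR (S i) ^ 2 * (x ^ S i / (INR (S i) * INR (fact i) * INR (S i))))
      with (x * x ^ i / INR (fact i)) by (change (x ^ S i) with (x * x ^ i); field; lra).
    apply Rmult_le_reg_r with (INR (fact i)); [lra |].
    unfold Rdiv; rewrite Rmult_assoc, Rinv_l by lra; nra.
  - rewrite tech3 by lra.
    assert (0 <= x ^ S N) by (apply pow_le; lra).
    apply Rmult_le_compat_r; [apply Rlt_le, Rinv_0_lt_compat |]; lra.
Qed.

Lemma G_scaled_bounds m x : (1 <= m)%nat -> 0 <= x < 1 ->
  sum_f_R0 (Ein_term x) (pred m) - 1 / ((1 - x) * INR m) <= G m (x / INR m)
  <= sum_f_R0 (Ein_term x) (pred m).
Proof.
  intros Hm Hx; rewrite G_falling_ratio by exact Hm.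
  assert (HM : 0 < INR m) by (apply lt_0_INR; lia).
  split.
  - pose proof (Ein_weighted_sum_le x (pred m) Hx) as Hw.
    apply Rle_trans with
      (sum_f_R0 (fun i => Ein_term x i - INR (S i) ^ 2 * Ein_term x i / INR m) (pred m)).
    + rewrite minus_sum.
      unfold Rdiv at 2.
      rewrite <- (scal_sum (fun i => INR (S i) ^ 2 * Ein_term x i) _ (/ INR m)).
      replace (1 / ((1 - x) * INR m)) with (/ INR m * (1 / (1 - x))) by (field; lra).
      apply Rplus_le_compat_l, Ropp_le_contravar, Rmult_le_compat_l;
        [apply Rlt_le, Rinv_0_lt_compat |]; lra.
    + apply sum_Rle; intros i Hi.
      destruct (falling_ratio_bounds m (S i) Hm ltac:(lia)) as [_ H2].
      pose proof (Ein_term_nonneg x i (proj1 Hx)).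
      replace (Ein_term x i - INR (S i) ^ 2 * Ein_term x i / INR m)
        with ((1 - INR (S i) ^ 2 / INR m) * Ein_term x i) by (field; lra).
      apply Rmult_le_compat_r; assumption.
  - apply sum_Rle; intros i Hi.
    destruct (falling_ratio_bounds m (S i) Hm ltac:(lia)) as [[_ H1] _].
    pose proof (Ein_term_nonneg x i (proj1 Hx)); nra.
Qed.

Lemma Ein_partial_le_1 kappa N : is_kappa kappa -> sum_f_R0 (Ein_term kappa) N <= 1.
Proof.
  intros [Hk Hser]; apply sum_incr.
  - apply is_lim_seq_Reals, is_lim_seq_ext with (sum_n (Ein_term kappa)); [| exact Hser].
    intros n; apply sum_n_Reals.
  - intros i; apply Ein_term_nonneg; lra.
Qed.

Lemma kappa_lt_1 kappa : is_kappa kappa -> kappa < 1.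
Proof.
  intros Hk; pose proof (Ein_partial_le_1 kappa 1 Hk) as H; destruct Hk as [Hk _].
  simpl in H; unfold Ein_term in H; simpl in H.
  assert (kappa * 1 / (1 * 1) + kappa * (kappa * 1) / ((1 + 1) * (1 + 1)) = kappa + kappa ^ 2 / 4)
    by field.
  nra.
Qed.

Lemma theta_error_bound M r z kappa d : 1 <= M -> 0 < r -> 0 < kappa <= z -> z - kappa <= d ->
  - (2 * d / r) <= (M + 1) * (M * r / (M * r + z) - 1 / (1 + kappa / (M * r))) <= 0.
Proof.
  intros HM Hr Hkz Hd.
  assert (HA : 0 < M * r) by nra.
  set (A := M * r) in *.
  set (e := A * (z - kappa) / ((A + z) * (A + kappa))).
  replace (A / (A + z) - 1 / (1 + kappa / A)) with (- e) by (unfold e; field; lra).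
  assert (He : e * ((A + z) * (A + kappa)) = A * (z - kappa)) by (unfold e; field; lra).
  assert (He0 : 0 <= e) by (unfold e; apply Rdiv_le_0_compat; nra).
  assert (HeA : e * A <= z - kappa).
  { apply Rmult_le_reg_r with A; [exact HA |].
    assert (0 <= e * (A * (z + kappa) + z * kappa)) by (apply Rmult_le_pos; nra).
    nra. }
  replace (2 * d / r) with (2 * d * / r) by reflexivity.
  assert (Hr' : 0 < / r) by (apply Rinv_0_lt_compat; lra).
  assert (H2A : (M + 1) * r <= 2 * A) by (unfold A; nra).
  assert (Hr1 : r * / r = 1) by (field; lra).
  split; nra.
Qed.

Lemma theta_star_error n s kappa th :
  (2 <= n)%nat -> 0 <= s < 1 -> is_kappa kappa -> is_theta_star n s th ->
  - (2 * kappa / (1 - s) * (/ G (n - 1) (kappa / INR (n - 1)) - 1))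
  <= INR n * (th - 1 / (1 + kappa / ((INR n - 1) * (1 - s)))) <= 0.
Proof.
  intros Hn Hs Hk Hth.
  pose proof (theta_star_G n s th Hn ltac:(lra) Hth) as HG.
  pose proof (kappa_lt_1 kappa Hk) as Hk1.
  destruct Hth as [Hth _].
  set (m := (n - 1)%nat) in *.
  assert (Hm : (1 <= m)%nat) by (unfold m; lia).
  assert (HM : INR m = INR n - 1) by (unfold m; rewrite minus_INR by lia; reflexivity).
  rewrite <- HM; replace (INR n) with (INR m + 1) by lra.
  set (M := INR m) in *.
  assert (HM1 : 1 <= M) by (apply (le_INR 1); exact Hm).
  set (r := 1 - s) in *.
  assert (Hr : 0 < r) by (unfold r; lra).
  set (g := G m (kappa / M)).
  assert (Hg1 : g <= 1).
  { pose proof (G_scaled_bounds m kappa Hm ltac:(destruct Hk; lra)) as [_ H].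
    pose proof (Ein_partial_le_1 kappa (pred m) Hk); unfold g, M; lra. }
  destruct Hk as [Hk0 _].
  set (z := M * ((1 - th) * r / th)).
  destruct (G_level_bracket m (kappa / M) ((1 - th) * r / th))
    as [Hkz Hzg]; try assumption.
  { apply Rdiv_lt_0_compat; lra. }
  { apply Rdiv_le_0_compat; nra. }
  fold g in Hzg.
  assert (HM0 : 0 < M) by lra.
  assert (Hz : kappa <= z).
  { replace kappa with (M * (kappa / M)) by (field; lra).
    unfold z; apply Rmult_le_compat_l; lra. }
  assert (Hzg' : z * g <= kappa).
  { replace kappa with (M * (kappa / M)) by (field; lra).
    unfold z; rewrite Rmult_assoc; apply Rmult_le_compat_l; lra. }
  assert (Hg0 : 0 < g) by (apply G_pos, Rdiv_lt_0_compat; lra).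
  assert (Hgap : z - kappa <= kappa * (/ g - 1)).
  { apply Rmult_le_reg_r with g; [exact Hg0 |].
    replace (kappa * (/ g - 1) * g) with (kappa - kappa * g) by (field; lra); nra. }
  replace th with (M * r / (M * r + z)) by (unfold z; field; repeat split; nra).
  replace (2 * kappa / r * (/ g - 1)) with (2 * (kappa * (/ g - 1)) / r) by (field; lra).
  apply theta_error_bound; lra.
Qed.

Lemma is_lim_G_kappa kappa : is_kappa kappa -> is_lim_seq (fun m => G m (kappa / INR m)) 1.
Proof.
  intros Hk.
  pose proof (kappa_lt_1 kappa Hk) as Hk1.
  assert (Hk0 : 0 < kappa) by (destruct Hk; assumption).
  apply is_lim_seq_le_le_loc with
    (u := fun m => sum_f_R0 (Ein_term kappa) (pred m) - 1 / ((1 - kappa) * INR m))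
    (w := fun _ => 1).
  - exists 1%nat; intros m Hm.
    pose proof (G_scaled_bounds m kappa Hm ltac:(lra)) as [H1 H2].
    pose proof (Ein_partial_le_1 kappa (pred m) Hk); lra.
  - apply is_lim_seq_incr_1.
    replace (Finite 1) with (Finite (1 - / (1 - kappa) * 0)) by (f_equal; ring).
    apply is_lim_seq_ext with
      (fun m => sum_f_R0 (Ein_term kappa) m - / (1 - kappa) * / INR (S m)).
    { intros m; simpl pred; f_equal; field; split; [apply not_0_INR; lia | lra]. }
    apply is_lim_seq_minus'.
    + apply is_lim_seq_ext with (sum_n (Ein_term kappa)); [apply sum_n_Reals |].
      destruct Hk as [_ Hser]; exact Hser.
    + apply (is_lim_seq_scal_l _ _ 0).
      replace (Finite 0) with (Rbar_inv p_infty) by reflexivity.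
      apply is_lim_seq_inv; [| discriminate].
      apply (is_lim_seq_incr_1 INR), is_lim_seq_INR.
  - apply is_lim_seq_const.
Qed.

Theorem mainTheorem16 :
  forall (s kappa : R) (theta : nat -> R),
    0 <= s < 1 ->
    is_kappa kappa ->
    (forall n : nat, (2 <= n)%nat -> is_theta_star n s (theta n)) ->
    is_lim_seq
      (fun n : nat =>
         INR n * (theta n - 1 / (1 + kappa / ((INR n - 1) * (1 - s)))))
      0.
Proof.
  intros s kappa theta Hs Hk Hth.
  set (w := fun n => 2 * kappa / (1 - s) * (/ G (n - 1) (kappa / INR (n - 1)) - 1)).
  assert (Hw : is_lim_seq w 0).
  { apply is_lim_seq_incr_1.
    replace (Finite 0) with (Finite (2 * kappa / (1 - s) * (/ 1 - 1))) by (f_equal; field; lra).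
    apply (is_lim_seq_scal_l _ _ (/ 1 - 1)), is_lim_seq_minus'; [| apply is_lim_seq_const].
    apply (is_lim_seq_inv _ 1); [| injection; lra].
    apply is_lim_seq_ext with (fun m => G m (kappa / INR m)); [intros m; simpl; now rewrite Nat.sub_0_r |].
    now apply is_lim_G_kappa. }
  apply is_lim_seq_le_le_loc with (u := fun n => - w n) (w := fun _ => 0).
  - exists 2%nat; intros n Hn; apply theta_star_error; auto.
  - replace (Finite 0) with (Rbar_opp 0) by (simpl; f_equal; ring).
    now apply -> is_lim_seq_opp.
  - apply is_lim_seq_const.
Qed.
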